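(* Let $z\ge0$ and let $(C,F)$ be a $z$-antler in an undirected multigraph $G$. Then there exists $F'\subseteq F$ such that $(C,F')$ is a $z$-antler in $G$ and $G[F']$ has at most $\frac{|C|}{2}(z^2+2z-1)$ trees.
   Context: A feedback vertex set (FVS) of $G$ is a set $X\subseteq V(G)$ with $G-X$ acyclic (self-loops and pairs of parallel edges count as cycles); $\mathrm{fvs}(G)$ is its minimum size. For disjoint $X,Y$, $e(X,Y)$ is the number of edges between $X$ and $Y$. A feedback vertex cut (FVC) in $G$ is a pair of disjoint sets $C,F\subseteq V(G)$ such that $G[F]$ is a forest and every tree $T$ of $G[F]$ satisfies $e(V(T),V(G)\setminus(C\cup F))\le1$. An antler is a FVC $(C,F)$ with $|C|\le\mathrm{fvs}(G[C\cup F])$. For $C\subseteq V(G)$, a $C$-certificate is a subgraph $H$ of $G$ such that $C$ is a minimum FVS of $H$; it has order $z$ if every component $H'$ of $H$ satisfies $\mathrm{fvs}(H')=|C\cap V(H')|\le z$. A $z$-antler is an antler $(C,F)$ such that $G[C\cup F]$ contains a $C$-certificate of order $z$. *)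

From mathcomp Require Import all_boot all_order all_algebra.
Set Implicit Arguments. Unset Strict Implicit. Unset Printing Implicit Defensive.

(* A finite undirected multigraph on a finite vertex type V is given by a
   multiplicity function m : V -> V -> nat, assumed symmetric (m x y = m y x);
   m x y is the number of edges between x and y, and m x x the number of
   self-loops at x. *)

Section MGraph.
Variable V : finType.
Implicit Types (m : V -> V -> nat) (S X Y C F : {set V}).

Definition acyclic_on m S : bool :=
  [&& [forall x in S, m x x == 0],
      [forall x in S, forall y in S, (x != y) ==> (m x y <= 1)]
    & ~~ [exists n : 'I_(#|V|).+1, exists t : n.-tuple V,
            [&& 3 <= n, uniq t, all (fun v => v \in S) t
              & cycle (fun a b => 0 < m a b) t]]].

Definition is_fvs m S X : bool := (X \subset S) && acyclic_on m (S :\: X).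

(* fvs = minimum size of a feedback vertex set (S itself is always one) *)
Definition fvs m S : nat :=
  \big[minn/#|S|]_(X : {set V} | is_fvs m S X) #|X|.

Definition is_min_fvs m S X : bool := is_fvs m S X && (#|X| == fvs m S).

Definition adj m S : rel V := fun x y => [&& x \in S, y \in S & 0 < m x y].

Definition components m S : {set {set V}} :=
  [set [set y in S | connect (adj m S) x y] | x in S].

Definition e m X Y : nat := \sum_(x in X) \sum_(y in Y) m x y.

Definition FVC m C F : bool :=
  [&& [disjoint C & F], acyclic_on m F
    & [forall T in components m F, e m T (~: (C :|: F)) <= 1]].

Definition antler m C F : bool := FVC m C F && (#|C| <= fvs m (C :|: F)).

Definition subgraph_of m (W : {set V}) S (mH : V -> V -> nat) : Prop :=
  [/\ S \subset W,
      (forall x y, mH x y <= m x y),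
      (forall x y, mH x y = mH y x)
    & (forall x y, 0 < mH x y -> (x \in S) && (y \in S))].

Definition certificate_of_order (z : nat) C S (mH : V -> V -> nat) : Prop :=
  is_min_fvs mH S C /\
  forall K, K \in components mH S ->
    fvs mH K = #|C :&: K| /\ #|C :&: K| <= z.

Definition z_antler m (z : nat) C F : Prop :=
  antler m C F /\
  exists (S : {set V}) (mH : V -> V -> nat),
    subgraph_of m (C :|: F) S mH /\ certificate_of_order z C S mH.

End MGraph.

From mathcomp Require Import all_boot all_order all_algebra.
From mathcomp Require Import zify.
Set Implicit Arguments. Unset Strict Implicit. Unset Printing Implicit Defensive.

(* Let (S, mH) be the certificate. The forest S - C splits into trees. For
   every c in C keep z trees P such that P + c has a cycle, and for every pair
   c1 != c2 in C keep z + 1 trees adjacent to both (all of them if there are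
   fewer). C and the kept trees still carry a C-certificate of order z: if
   removing a set Y with |Y| < |C \cap K| <= z made the kept part of a component
   K acyclic, then Y misses a kept tree (two kept trees for a pair) linking the
   same vertices of C as any discarded tree, so each discarded tree meets the
   kept part in at most one edge and K - Y would be acyclic as well. Let F' be
   the union of the components of G[F] that contain kept trees; then
   |C| = fvs(certificate) <= fvs(G[C + F']), so (C, F') is an antler. Trees are
   kept only for vertices in a common certificate component, which has at most
   z vertices of C, so 2 #trees <= |C| (2z + (z + 1)(z - 1)). *)

Lemma uniq_last_id (T : eqType) (x : T) s : uniq (x :: s) -> last x s = x -> s = [::].
Proof. by move=> us lx; apply/eqP; rewrite -size_eq0 -(index_last us) lx /= eqxx. Qed.

Section Counting.
Variable T : finType.
Implicit Types (A B D Y : {set T}) (P : {set {set T}}).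

Lemma card_bigcup_le (I : finType) (p : pred I) (F : I -> {set T}) :
  #|\bigcup_(i | p i) F i| <= \sum_(i | p i) #|F i|.
Proof.
apply: (big_ind2 (fun (A : {set T}) n => #|A| <= n)) => [|A1 n1 A2 n2 h1 h2|//].
  by rewrite cards0.
by apply: leq_trans (leq_add h1 h2); rewrite cardsU leq_subr.
Qed.

Lemma sum_mem_card A B : \sum_(x in A) (x \in B : nat) = #|A :&: B|.
Proof.
symmetry; rewrite -sum1_card (eq_bigl (fun x => (x \in A) && (x \in B))); last first.
  by move=> x; rewrite inE.
by rewrite big_mkcondr; apply: eq_bigr => x _; case: (x \in B).
Qed.

Lemma card_partition_setI P D A : partition P D -> A \subset D ->
  #|A| = \sum_(K in P) #|A :&: K|.
Proof.
move=> partP AD; rewrite -{1}(setIidPr AD) -sum_mem_card (set_partition_big P partP).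
by apply: eq_bigr => K _; rewrite sum_mem_card setIC.
Qed.

Lemma card_disjoint_from P Y : trivIset P ->
  #|P| <= #|[set A in P | [disjoint A & Y]]| + #|Y|.
Proof.
move=> /trivIsetP tP; set hit := [set A in P | ~~ [disjoint A & Y]].
have -> : #|P| = #|[set A in P | [disjoint A & Y]]| + #|hit|.
  rewrite -(cardsID [set A : {set T} | [disjoint A & Y]] P).
  by congr (_ + _); apply: eq_card => A; rewrite !inE //; apply: andbC.
rewrite leq_add2l; pose f A := [pick y in A :&: Y].
have fP A : A \in hit -> exists2 y, f A = Some y & y \in A :&: Y.
  rewrite inE -setI_eq0 => /andP[_ /set0Pn [y yAY]].
  by rewrite /f; case: pickP => [y' ?|/(_ y)]; [exists y' | rewrite yAY].
have f_inj : {in hit &, injective f}.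
  move=> A1 A2 h1 h2 E; have [y E1 /setIP[y1 _]] := fP A1 h1.
  have [y' E2 /setIP[y2 _]] := fP A2 h2.
  move: E2; rewrite -E E1 => [[yy]]; rewrite -yy in y2.
  have inP A : A \in hit -> A \in P by rewrite inE => /andP[].
  apply/eqP; apply: contraTT isT => /(tP _ _ (inP _ h1) (inP _ h2)) d12.
  by rewrite (disjointFr d12 y1) in y2.
rewrite -(card_in_imset f_inj) -(card_imset Y (@Some_inj _)).
apply: subset_leq_card; apply/subsetP => _ /imsetP [A hA ->].
by have [y -> /setIP[_ yY]] := fP A hA; apply: imset_f.
Qed.

End Counting.

Section Acyclicity.
Variable V : finType.
Implicit Types (m mH : V -> V -> nat) (S T W X : {set V}).

Lemma acyclic_onP m S :
  reflect [/\ forall x, x \in S -> m x x = 0,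
              forall x y, x \in S -> y \in S -> x != y -> m x y <= 1
            & forall s : seq V, 3 <= size s -> uniq s -> all (mem S) s ->
                 ~ cycle (fun a b => 0 < m a b) s]
          (acyclic_on m S).
Proof.
apply: (iffP and3P) => [[/forallP loop0 /forallP simple /existsPn nocycle]|].
  split.
  - by move=> x xS; apply/eqP; have /implyP := loop0 x; apply.
  - move=> x y xS yS.
    by have /implyP/(_ xS)/forallP/(_ y)/implyP/(_ yS)/implyP := simple x; apply.
  - move=> s s3 us als cs.
    have szs : size s < #|V|.+1 by rewrite ltnS -(card_uniqP us) max_card.
    have /existsPn/(_ (in_tuple s))/negP := nocycle (Ordinal szs); apply.
    by rewrite /= s3 us cs andbT; apply: sub_all als => v; rewrite inE.
move=> [loop0 simple nocycle]; split.
- by apply/forallP => x; apply/implyP => /loop0 ->.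
- apply/forallP => x; apply/implyP => xS; apply/forallP => y; apply/implyP => yS.
  by apply/implyP; apply: simple.
- apply/existsPn => n; apply/existsPn => t; apply/and4P => [[n3 ut alt]].
  by apply: nocycle; rewrite ?size_tuple.
Qed.

Lemma sub_acyclic_on m m' S T : T \subset S ->
  {in T &, forall x y, m' x y <= m x y} -> acyclic_on m S -> acyclic_on m' T.
Proof.
move=> /subsetP TS le /acyclic_onP [loop0 simple nocycle]; apply/acyclic_onP; split.
- by move=> x xT; apply/eqP; rewrite -leqn0 -(loop0 x (TS x xT)) le.
- move=> x y xT yT nxy.
  exact: leq_trans (le _ _ xT yT) (simple _ _ (TS _ xT) (TS _ yT) nxy).
- move=> s s3 us als cs; apply: (nocycle s s3 us).
    by apply/allP => v /(allP als); rewrite !inE; apply: TS.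
  apply: (sub_in_cycle (P := mem T)) cs => // x y xT yT /= mxy.
  exact: leq_trans mxy (le _ _ xT yT).
Qed.

Lemma acyclic_onS m S T : T \subset S -> acyclic_on m S -> acyclic_on m T.
Proof. by move=> TS; apply: sub_acyclic_on TS _ => x y _ _. Qed.

Lemma eq_acyclic_on m1 m2 T : {in T &, forall x y, m1 x y = m2 x y} ->
  acyclic_on m1 T = acyclic_on m2 T.
Proof.
by move=> E; apply/idP/idP; apply: sub_acyclic_on (subxx _) _ => x y xT yT;
  rewrite E.
Qed.

Lemma acyclic_on0 m : acyclic_on m set0.
Proof.
apply/acyclic_onP; split=> [x|x y|[|x s] //= _ _ /andP[]]; by rewrite inE.
Qed.

Lemma fvs_leq_card m S X : is_fvs m S X -> fvs m S <= #|X|.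
Proof.
rewrite /fvs => fvsX.
have : X \in index_enum {set V} by rewrite mem_index_enum.
elim: (index_enum _) => [//|Y r IHr]; rewrite inE big_cons.
case/orP => [/eqP <-|Xr]; first by rewrite fvsX geq_minl.
by case: ifP => _; [apply: leq_trans (geq_minr _ _) (IHr Xr) | apply: IHr].
Qed.

Lemma leq_fvs m S n : (forall X, is_fvs m S X -> n <= #|X|) -> n <= fvs m S.
Proof.
move=> lb; apply: (big_ind (fun k => n <= k)) => [||X /lb //].
- by apply: lb; rewrite /is_fvs subxx setDv acyclic_on0.
- by move=> a b ha hb; rewrite leq_min ha hb.
Qed.

Lemma fvs_subgraph m W S mH : subgraph_of m W S mH -> fvs mH S <= fvs m W.
Proof.
move=> [SW le _ _]; apply: leq_fvs => X /andP[XW acX].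
apply: leq_trans (fvs_leq_card (X := X :&: S) _) (subset_leq_card (subsetIl _ _)).
rewrite /is_fvs subsetIr; apply: sub_acyclic_on acX => [|x y _ _ //].
by rewrite setDIr setDv setU0; apply: setSD.
Qed.

Definition restrict m S x y := if (x \in S) && (y \in S) then m x y else 0.

Lemma restrict_le m S x y : restrict m S x y <= m x y.
Proof. by rewrite /restrict; case: ifP. Qed.

Lemma acyclic_restrict m S T : T \subset S ->
  acyclic_on (restrict m S) T = acyclic_on m T.
Proof.
move=> /subsetP TS; apply: eq_acyclic_on => x y xT yT.
by rewrite /restrict !TS.
Qed.

Lemma fvs_restrict m S T : T \subset S -> fvs (restrict m S) T = fvs m T.
Proof.
move=> TS; apply: eq_bigl => X; rewrite /is_fvs acyclic_restrict //.
exact: subset_trans (subsetDl _ _) TS.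
Qed.

Lemma components_restrict m S : components (restrict m S) S = components m S.
Proof.
have E : adj (restrict m S) S =2 adj m S.
  by move=> x y; rewrite /adj /restrict; case: (x \in S); case: (y \in S).
by apply: eq_imset => x; apply/setP => y; rewrite !inE (eq_connect E).
Qed.

Lemma subgraph_restrict m W W' S S' mH : subgraph_of m W S mH -> S' \subset W' ->
  subgraph_of m W' S' (restrict mH S').
Proof.
move=> [_ le sym _] S'W'; split=> // [x y|x y|x y].
- exact: leq_trans (restrict_le _ _ _ _) (le x y).
- by rewrite /restrict andbC sym.
- by rewrite /restrict; case: ifP.
Qed.

End Acyclicity.

Section Connectivity.
Variables (V : finType) (m : V -> V -> nat).
Implicit Types (A B K Q S T : {set V}).

Local Notation edge := (fun x y => 0 < m x y).

Definition component S x := [set y in S | connect (adj m S) x y].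

Lemma in_component S x y :
  (y \in component S x) = (y \in S) && connect (adj m S) x y.
Proof. by rewrite inE. Qed.

Lemma componentsP S K :
  reflect (exists2 x, x \in S & K = component S x) (K \in components m S).
Proof. exact: imsetP. Qed.

Lemma component_in_components S x : x \in S -> component S x \in components m S.
Proof. by move=> xS; apply/imsetP; exists x. Qed.

Lemma mem_component S x : x \in S -> x \in component S x.
Proof. by move=> xS; rewrite inE xS connect0. Qed.

Lemma component_sub S x : component S x \subset S.
Proof. by apply/subsetP => y; rewrite inE => /andP[]. Qed.

Lemma components_sub S K : K \in components m S -> K \subset S.
Proof. by move=> /componentsP [y yS ->]; apply: component_sub. Qed.

Lemma components_n0 S K : K \in components m S -> exists x, x \in K.
Proof. by move=> /componentsP [x xS ->]; exists x; apply: mem_component. Qed.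

Lemma adj_path_in S a p : path (adj m S) a p -> all (mem S) p.
Proof.
by elim: p a => //= y p IHp a /andP[/and3P[_ yS _] /IHp ->]; rewrite andbT.
Qed.

Lemma adj_path_edge S a p : path (adj m S) a p -> path edge a p.
Proof. by apply: sub_path => x y /and3P[]. Qed.

Lemma connect_adj_in S x y : connect (adj m S) x y -> x \in S -> y \in S.
Proof.
move=> /connectP [p pp ->] xS; have := mem_last x p.
by rewrite inE => /predU1P[-> //|/(allP (adj_path_in pp))].
Qed.

Lemma connect_adj_sub (m' : V -> V -> nat) S S' x y : S \subset S' ->
  (forall a b, 0 < m a b -> 0 < m' a b) ->
  connect (adj m S) x y -> connect (adj m' S') x y.
Proof.
move=> /subsetP SS' mm'; apply: connect_sub => a b /and3P[aS bS ab].
by apply: connect1; rewrite /adj !SS' ?mm'.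
Qed.

Lemma connect_uniq_path S a b : connect (adj m S) a b ->
  exists p, [/\ path (adj m S) a p, last a p = b & uniq (a :: p)].
Proof. by move=> /connectP [p /shortenP [p' pp' up' _] ->]; exists p'. Qed.

Lemma parallel_edges_cyclic T c a : c \in T -> a \in T -> c != a -> 1 < m c a ->
  ~~ acyclic_on m T.
Proof.
move=> cT aT nca mca; apply/negP => /acyclic_onP [_ simple _].
by have := simple c a cT aT nca; rewrite leqNgt mca.
Qed.

Lemma tree_loop_cyclic T Q c a b : c \in T -> Q \subset T -> c \notin Q ->
  a \in Q -> a != b -> connect (adj m Q) a b -> 0 < m c a -> 0 < m b c ->
  ~~ acyclic_on m T.
Proof.
move=> cT /subsetP QT cQ aQ nab cab eca ebc; apply/negP => /acyclic_onP [_ _ nocycle].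
have [p [pp lp up]] := connect_uniq_path cab.
have pQ : all (mem Q) (a :: p) by rewrite /= aQ (adj_path_in pp).
apply: (nocycle (c :: a :: p)).
- by case: p lp {pp up pQ} => [/= abE|] //; rewrite abE eqxx in nab.
- by rewrite cons_uniq up andbT; apply: contra cQ => /(allP pQ).
- by rewrite /= cT; apply: sub_all pQ => w /QT.
- by rewrite /= eca rcons_path (adj_path_edge pp) lp.
Qed.

Lemma two_trees_cyclic T Q1 Q2 c1 c2 a1 b1 a2 b2 :
  c1 \in T -> c2 \in T -> c1 != c2 -> Q1 \subset T -> Q2 \subset T ->
  [disjoint Q1 & Q2] ->
  [disjoint [set c1; c2] & Q1] -> [disjoint [set c1; c2] & Q2] ->
  a1 \in Q1 -> connect (adj m Q1) a1 b1 -> a2 \in Q2 -> connect (adj m Q2) a2 b2 ->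
  0 < m c1 a1 -> 0 < m b1 c2 -> 0 < m c2 a2 -> 0 < m b2 c1 ->
  ~~ acyclic_on m T.
Proof.
move=> c1T c2T n12 /subsetP Q1T /subsetP Q2T dQ dC1 dC2 a1Q cab1 a2Q cab2 e1 e2 e3 e4.
apply/negP => /acyclic_onP [_ _ nocycle].
have [p1 [pp1 lp1 up1]] := connect_uniq_path cab1.
have [p2 [pp2 lp2 up2]] := connect_uniq_path cab2.
have p1Q : all (mem Q1) (a1 :: p1) by rewrite /= a1Q (adj_path_in pp1).
have p2Q : all (mem Q2) (a2 :: p2) by rewrite /= a2Q (adj_path_in pp2).
have notQ c Q s : c \in [set c1; c2] -> [disjoint [set c1; c2] & Q] ->
    all (mem Q) s -> c \notin s.
  by move=> cc dCQ sQ; apply/negP => /(allP sQ); rewrite /= (disjointFr dCQ cc).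
apply: (nocycle (c1 :: (a1 :: p1) ++ c2 :: a2 :: p2)).
- by rewrite /= size_cat /= !addnS.
- have disjP w : w \in a2 :: p2 -> w \notin a1 :: p1.
    move=> /(allP p2Q) wQ2; apply/negP => /(allP p1Q) /=.
    by rewrite (disjointFl dQ wQ2).
  have c1p1 := notQ c1 Q1 _ (set21 c1 c2) dC1 p1Q.
  have c1p2 := notQ c1 Q2 _ (set21 c1 c2) dC2 p2Q.
  have c2p1 := notQ c2 Q1 _ (set22 c1 c2) dC1 p1Q.
  have c2p2 := notQ c2 Q2 _ (set22 c1 c2) dC2 p2Q.
  rewrite cons_uniq mem_cat cat_uniq up1 cons_uniq up2 negb_or c1p1 c2p2 /=.
  rewrite in_cons (negbTE n12) (negbTE c1p2) (negbTE c2p1) /= andbT.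
  apply/norP; split.
    exact/disjP/mem_head.
  by apply/hasPn => w wp2; apply: disjP; rewrite inE wp2 orbT.
- have /andP[aT1 pT1] : all (mem T) (a1 :: p1) by apply: sub_all p1Q => w /Q1T.
  have /andP[aT2 pT2] : all (mem T) (a2 :: p2) by apply: sub_all p2Q => w /Q2T.
  by rewrite /= c1T all_cat /= c2T; apply/and5P.
- rewrite /= e1 rcons_cat cat_path (adj_path_edge pp1) /= lp1 e2 /= e3.
  by rewrite rcons_path (adj_path_edge pp2) lp2.
Qed.

Section Symmetric.
Hypothesis msym : forall x y, m x y = m y x.

Lemma connect_adjC S x y : connect (adj m S) x y = connect (adj m S) y x.
Proof. by apply: sym_connect_sym => a b; rewrite /adj msym andbCA. Qed.

Lemma component_eq S x y : y \in component S x -> component S y = component S x.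
Proof.
rewrite inE => /andP[yS cxy]; apply/setP => w; rewrite !inE.
case: (w \in S) => //=; apply/idP/idP => [|cxw]; first exact: connect_trans.
by apply: connect_trans cxw; rewrite connect_adjC.
Qed.

Lemma componentsE S K x : K \in components m S -> x \in K -> K = component S x.
Proof. by move=> /imsetP [y yS ->] /component_eq ->. Qed.

Lemma components_eq S K1 K2 x : K1 \in components m S -> K2 \in components m S ->
  x \in K1 -> x \in K2 -> K1 = K2.
Proof. by move=> cK1 cK2 /(componentsE cK1) -> /(componentsE cK2) ->. Qed.

Lemma components_partition S : partition (components m S) S.
Proof.
apply: equivalence_partitionP => x y w _ _ _; split=> [|cxy]; first exact: connect0.
apply/idP/idP => [cxw|]; last exact: connect_trans.
by apply: connect_trans cxw; rewrite connect_adjC.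
Qed.

Lemma components_trivIset S : trivIset (components m S).
Proof. by case/and3P: (components_partition S). Qed.

Lemma components_disjoint S K1 K2 : K1 \in components m S ->
  K2 \in components m S -> K1 != K2 -> [disjoint K1 & K2].
Proof. exact: (trivIsetP (components_trivIset S)). Qed.

Lemma components_closed S K x y : K \in components m S -> x \in K -> y \in S ->
  0 < m x y -> y \in K.
Proof.
move=> cK xK yS mxy; rewrite (componentsE cK xK) inE yS /=.
by apply: connect1; rewrite /adj yS mxy (subsetP (components_sub cK)).
Qed.

Lemma components_connect S K x y : K \in components m S -> x \in K -> y \in K ->
  connect (adj m K) x y.
Proof.
move=> cK xK yK; have : y \in component S x by rewrite -(componentsE cK xK).
rewrite inE => /andP[yS /connectP [p pp ->]].
have pK : all (mem K) (x :: p).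
  apply/allP => w wp; have cxw := path_connect pp wp.
  rewrite inE (componentsE cK xK) in_component cxw andbT; apply: connect_adj_in cxw _.
  exact: (subsetP (components_sub cK)).
apply/connectP; exists p => //; apply: sub_in_path pK pp => a b aK bK.
by case/and3P => _ _ ab; rewrite /adj aK bK ab.
Qed.

Lemma components_subset S S' K K' x : S \subset S' ->
  K \in components m S -> K' \in components m S' -> x \in K -> x \in K' ->
  K \subset K'.
Proof.
move=> SS' cK cK' xK xK'; apply/subsetP => y yK.
rewrite (componentsE cK' xK') inE (subsetP SS') ?(subsetP (components_sub cK)) //=.
apply: connect_adj_sub (components_connect cK xK yK) => //.
exact: subset_trans (components_sub cK) SS'.
Qed.

Section Gluing.
Variables A B : {set V}.
Hypothesis disjAB : [disjoint A & B].
Hypothesis single_attachment : forall b1 b2 a1 a2,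
  b1 \in B -> connect (adj m B) b1 b2 -> a1 \in A -> a2 \in A ->
  0 < m b1 a1 -> 0 < m b2 a2 -> b1 = b2 /\ a1 = a2.

Lemma cycle_through_B_short b r : b \in B -> all (mem (A :|: B)) r ->
  last b r \in A -> cycle edge (b :: r) -> uniq (b :: r) -> size r <= 1.
Proof.
move=> bB rAB lastA.
have rA : has (mem A) r.
  case: r lastA {rAB} => [/= bA|x r lA].
    by rewrite (disjointFl disjAB bB) in bA.
  by apply/hasP; exists (last x r); rewrite ?mem_last.
move: rAB lastA; case/split_find: rA => a2 p r' a2A pA.
rewrite cat_rcons all_cat /= => /andP[pAB _].
have pB : all (mem B) (b :: p).
  rewrite /= bB; apply/allP => w wp; have := allP pAB w wp.
  by rewrite inE in_setU => /orP[wA|//]; case/hasP: pA; exists w.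
rewrite last_cat /= rcons_cat cat_path /= rcons_path -cons_uniq -cat_cons cat_uniq.
move=> lA /and3P[pp ep /andP[_ er]] /and3P[ubp _ uar'].
have cb : connect (adj m B) b (last b p).
  apply: path_connect (mem_last b p); apply: sub_in_path pB pp => x y xB yB.
  by rewrite /adj xB yB.
(* [b :: p] is a path in B attached to A at both ends, so [single_attachment]
   forces [p] and [r'] to be empty. *)
have eb : 0 < m b (last a2 r') by rewrite msym.
have [lpb lra] := single_attachment bB cb lA a2A eb ep.
by rewrite (uniq_last_id ubp (esym lpb)) (uniq_last_id uar' lra).
Qed.

Lemma acyclic_on_setU : acyclic_on m A -> acyclic_on m B ->
  (forall b a, b \in B -> a \in A -> m b a <= 1) -> acyclic_on m (A :|: B).
Proof.
move=> /acyclic_onP [loopA simpleA cycA] /acyclic_onP [loopB simpleB cycB] simpleAB.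
apply/acyclic_onP; split.
- by move=> x; rewrite in_setU => /orP[/loopA|/loopB].
- move=> x y; rewrite !in_setU => /orP[xA|xB] /orP[yA|yB] nxy.
  + exact: simpleA.
  + by rewrite msym; apply: simpleAB.
  + exact: simpleAB.
  + exact: simpleB.
move=> s s3 us sAB cs.
have [sA|/allPn [x xs xA]] := boolP (all (mem A) s); first exact: (cycA s).
have [sB|/allPn [y ys yB]] := boolP (all (mem B) s); first exact: (cycB s).
have yA : y \in A by case/setUP: (allP sAB y ys) => // yB'; case/negP: yB.
have xB : x \in B by case/setUP: (allP sAB x xs) => // xA'; case/negP: xA.
have [i s' Es] := rot_to ys.
have hasB : has (mem B) s'.
  apply/hasP; exists x => //; have : x \in y :: s' by rewrite -Es mem_rot.
  by rewrite inE => /predU1P[xy|//]; case/negP: xA; rewrite xy.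
move: Es; case/split_find: hasB => b q r1 bB qB Es.
have Et : rot (size (y :: q)) (rot i s) = b :: r1 ++ y :: q.
  by rewrite Es cat_rcons -cat_cons rot_size_cat.
have memEt : b :: r1 ++ y :: q =i s by move=> w; rewrite -Et !mem_rot.
have qA : all (mem A) (y :: q).
  rewrite /= yA; apply/allP => w wq.
  have /(allP sAB) : w \in s by rewrite -memEt inE mem_cat inE wq !orbT.
  by case/setUP => // wB; case/hasP: qB; exists w.
have short : size (r1 ++ y :: q) <= 1.
  apply: cycle_through_B_short bB _ _ _ _; rewrite -?Et ?rot_cycle ?rot_uniq //.
    by apply/allP => w wr; apply: (allP sAB); rewrite -memEt inE wr orbT.
  by rewrite last_cat; apply: (allP qA); exact: (mem_last y q).
have : size (b :: r1 ++ y :: q) = size s by rewrite -Et !size_rot.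
by move=> /= Esz; move: s3; rewrite -Esz ltnS ltnNge short.
Qed.

End Gluing.

Lemma acyclic_on_setU_disconnected A B : [disjoint A & B] ->
  (forall b a, b \in B -> a \in A -> m b a = 0) ->
  acyclic_on m A -> acyclic_on m B -> acyclic_on m (A :|: B).
Proof.
move=> dAB noedge acA acB.
apply: acyclic_on_setU => // [b1 b2 a1 a2 b1B _ a1A|b a bB aA]; by rewrite noedge.
Qed.

End Symmetric.
End Connectivity.

Section Reach.
Variables (V : finType) (m : V -> V -> nat).
Hypothesis msym : forall x y, m x y = m y x.
Implicit Types (C F X : {set V}).

Definition reach F X := [set y in F | [exists x in X, connect (adj m F) x y]].

Lemma reach_sub F X : reach F X \subset F.
Proof. by apply/subsetP => y; rewrite inE => /andP[]. Qed.

Lemma sub_reach F X : X \subset F -> X \subset reach F X.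
Proof.
move=> /subsetP XF; apply/subsetP => x xX; rewrite inE XF //=.
by apply/existsP; exists x; rewrite xX connect0.
Qed.

Lemma reach_closed F X u y : u \in reach F X -> y \in F -> 0 < m u y ->
  y \in reach F X.
Proof.
rewrite !inE => /andP[uF /existsP [x /andP[xX cxu]]] yF uy; rewrite yF /=.
by apply/existsP; exists x; rewrite xX (connect_trans cxu) // connect1 // /adj uF yF.
Qed.

Lemma connect_reach F X u v : u \in reach F X -> connect (adj m F) u v ->
  connect (adj m (reach F X)) u v.
Proof.
move=> uR /connectP [p pp ->]; elim: p u uR pp => [|w p IHp] u uR /=.
  by rewrite connect0.
move=> /andP[/and3P[uF wF uw] pp]; have wR := reach_closed uR wF uw.
by apply: connect_trans (IHp w wR pp); apply: connect1; rewrite /adj uR wR.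
Qed.

Lemma component_reach F X x : x \in reach F X ->
  component m (reach F X) x = component m F x.
Proof.
move=> xR; apply/setP => y; rewrite !in_component.
apply/andP/andP => [[yR cxy]|[yF cxy]].
  split; first exact: (subsetP (reach_sub F X)).
  by apply: connect_adj_sub cxy; rewrite ?reach_sub.
have cxy' := connect_reach xR cxy; split=> //; exact: connect_adj_in cxy' xR.
Qed.

Lemma components_reach F X : components m (reach F X) \subset components m F.
Proof.
apply/subsetP => _ /componentsP [x xR ->]; rewrite component_reach //.
by apply: component_in_components; apply: (subsetP (reach_sub F X)).
Qed.

Lemma FVC_reach C F X : FVC m C F -> FVC m C (reach F X).
Proof.
case/and3P=> dCF acF /forallP attach; apply/and3P; split.
- exact: disjointWr (reach_sub F X) dCF.
- exact: acyclic_onS (reach_sub F X) acF.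
apply/forallP => T; apply/implyP => cT; have /implyP := attach T.
rewrite (subsetP (components_reach F X) T cT) => /(_ isT); apply: leq_trans.
rewrite /e leq_eqVlt; apply/orP; left; apply/eqP; apply: eq_bigr => t tT.
have tR : t \in reach F X := subsetP (components_sub cT) t tT.
rewrite [LHS]big_mkcond [RHS]big_mkcond; apply: eq_bigr => y _.
rewrite !in_setC !in_setU.
case yR: (y \in reach F X); first by rewrite (subsetP (reach_sub F X) y yR) !orbT.
case yF: (y \in F); rewrite ?orbT ?orbF //=; case: ifP => // _.
by apply/eqP; rewrite eqn0Ngt; apply: contraFN yR; apply: reach_closed.
Qed.

Lemma card_components_reach F (Q : {set {set V}}) : cover Q \subset F ->
  (forall P, P \in Q -> {in P &, forall x y, connect (adj m F) x y}) ->
  #|components m (reach F (cover Q))| <= #|Q|.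
Proof.
move=> /subsetP QF Pconn.
pose rep (P : {set V}) := if [pick x in P] is Some r then component m F r else set0.
apply: (@leq_trans #|rep @: Q|); last exact: leq_imset_card.
apply: subset_leq_card.
apply/subsetP => _ /componentsP [x xR ->]; move: (xR); rewrite inE => /andP[xF].
case/existsP => p /andP[/bigcupP [P PQ pP] cpx]; apply/imsetP; exists P => //.
rewrite /rep; case: pickP => [r rP|/(_ p)]; last by rewrite pP.
rewrite component_reach // -(component_eq msym (y := r)) // in_component.
have rF : r \in F by apply: QF; apply/bigcupP; exists P.
by rewrite rF (connect_adjC msym); apply: connect_trans (Pconn P PQ r p rP pP) cpx.
Qed.

End Reach.

Section ShrinkCertificate.
Variables (V : finType) (mH : V -> V -> nat) (z : nat) (C S : {set V}).
Hypothesis mHsym : forall x y, mH x y = mH y x.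
Hypothesis cert : certificate_of_order z C S mH.
Implicit Types (K P R T X Y : {set V}).

Lemma C_sub_S : C \subset S.
Proof. by case: cert => /andP[/andP[]]. Qed.

Lemma acyclic_forest : acyclic_on mH (S :\: C).
Proof. by case: cert => /andP[/andP[]]. Qed.

Lemma fvs_component K : K \in components mH S -> fvs mH K = #|C :&: K|.
Proof. by case: cert => _ /(_ K) h /h []. Qed.

Lemma card_C_component K : K \in components mH S -> #|C :&: K| <= z.
Proof. by case: cert => _ /(_ K) h /h []. Qed.

Local Notation trees := (components mH (S :\: C)).

Lemma trees_sub P : P \in trees -> P \subset S :\: C.
Proof. exact: components_sub. Qed.

Lemma trees_disjoint_C P : P \in trees -> [disjoint C & P].
Proof.
by move=> /trees_sub; rewrite subsetD disjoint_sym => /andP[].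
Qed.

(* [links P c c] means that [P + c] contains a cycle. *)
Definition links P c1 c2 : bool :=
  if c1 == c2 then [exists a in P, 1 < mH a c1] ||
     [exists a in P, exists b in P, [&& a != b, 0 < mH a c1 & 0 < mH b c1]]
  else [exists a in P, 0 < mH a c1] && [exists b in P, 0 < mH b c2].

Lemma linksC P c1 c2 : c1 != c2 -> links P c1 c2 = links P c2 c1.
Proof. by move=> n12; rewrite /links (negbTE n12) eq_sym (negbTE n12) andbC. Qed.

Lemma links_adj P c1 c2 : links P c1 c2 -> exists2 a, a \in P & 0 < mH a c1.
Proof.
rewrite /links; case: eqP => _.
  case/orP => [/existsP [a /andP[aP /ltnW]]|/existsP [a /andP[aP /existsP [b]]]].
    by exists a.
  by case/andP=> _ /and3P[_ ? _]; exists a.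
by case/andP => /existsP [a /andP[aP ?]] _; exists a.
Qed.

Lemma links_sub_component K P c1 c2 : K \in components mH S -> P \in trees ->
  c1 \in K -> links P c1 c2 -> P \subset K.
Proof.
move=> cK tP c1K /links_adj [a aP ac1].
have aS : a \in S by have := subsetP (trees_sub tP) a aP; rewrite inE => /andP[].
have aK : a \in K by apply: (components_closed mHsym cK c1K aS); rewrite mHsym.
exact: (components_subset mHsym (subsetDl S C) tP cK aP aK).
Qed.

Lemma link_loop_cyclic T P c : P \in trees -> c \in C -> links P c c ->
  c \in T -> P \subset T -> ~~ acyclic_on mH T.
Proof.
move=> tP cC; have cP := disjointFr (trees_disjoint_C tP) cC.
rewrite /links eqxx => /orP[/existsP [a /andP[aP mac]]|].
  move=> cT PT; apply: (parallel_edges_cyclic cT (subsetP PT a aP)).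
    by apply: contraFneq cP => ->.
  by rewrite mHsym.
case/existsP => a /andP[aP /existsP [b /andP[bP /and3P[nab ea eb]]]] cT PT.
apply: (tree_loop_cyclic cT PT (negbT cP) aP nab) => //.
  exact: (components_connect mHsym tP aP bP).
by rewrite mHsym.
Qed.

Lemma link_pair_cyclic T P1 P2 c1 c2 : P1 \in trees -> P2 \in trees -> P1 != P2 ->
  c1 \in C -> c2 \in C -> c1 != c2 -> links P1 c1 c2 -> links P2 c1 c2 ->
  c1 \in T -> c2 \in T -> P1 \subset T -> P2 \subset T -> ~~ acyclic_on mH T.
Proof.
move=> tP1 tP2 n12 c1C c2C nc; rewrite /links (negbTE nc).
case/andP => /existsP [x1 /andP[x1P e1]] /existsP [y1 /andP[y1P f1]].
case/andP => /existsP [x2 /andP[x2P e2]] /existsP [y2 /andP[y2P f2]] c1T c2T P1T P2T.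
have cC : [set c1; c2] \subset C by rewrite subUset !sub1set c1C c2C.
apply: (two_trees_cyclic c1T c2T nc P1T P2T _ _ _ x1P
  (components_connect mHsym tP1 x1P y1P) y2P (components_connect mHsym tP2 y2P x2P)).
- exact: (components_disjoint mHsym tP1 tP2 n12).
- exact: (disjointWl cC (trees_disjoint_C tP1)).
- exact: (disjointWl cC (trees_disjoint_C tP2)).
- by rewrite mHsym.
- by [].
- by rewrite mHsym.
- by [].
Qed.

(* For [c1 != c2], only the pair with [enum_rank c1 < enum_rank c2] gets a quota,
   so that every unordered pair of [C] is treated once. *)
Definition quota (c1 c2 : V) : nat :=
  if c1 == c2 then z else if enum_rank c1 < enum_rank c2 then z.+1 else 0.

Definition linking (c1 c2 : V) := [set P in trees | links P c1 c2].

Definition kept (c1 c2 : V) := [set P in take (quota c1 c2) (enum (linking c1 c2))].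

Definition kept_trees := \bigcup_(c1 in C) \bigcup_(c2 in C) kept c1 c2.

Definition S_kept := C :|: cover kept_trees.

Lemma kept_sub_linking c1 c2 : kept c1 c2 \subset linking c1 c2.
Proof. by apply/subsetP => P; rewrite inE => /mem_take; rewrite mem_enum. Qed.

Lemma kept_sub_trees c1 c2 : kept c1 c2 \subset trees.
Proof.
apply/subsetP => P /(subsetP (kept_sub_linking c1 c2)).
by rewrite inE => /andP[].
Qed.

Lemma card_kept c1 c2 : #|kept c1 c2| = minn (quota c1 c2) #|linking c1 c2|.
Proof.
rewrite cardsE (card_uniqP (take_uniq _ (enum_uniq _))).
by rewrite size_take_min cardE.
Qed.

Lemma card_kept_full c1 c2 R : R \in linking c1 c2 -> R \notin kept c1 c2 ->
  #|kept c1 c2| = quota c1 c2.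
Proof.
move=> Rl; rewrite card_kept; case: (leqP #|linking c1 c2| (quota c1 c2)) => // h.
by rewrite inE take_oversize -?cardE // mem_enum Rl.
Qed.

Lemma mem_kept_trees c1 c2 P : c1 \in C -> c2 \in C -> P \in kept c1 c2 ->
  P \in kept_trees.
Proof.
by move=> c1C c2C Pk; apply/bigcupP; exists c1 => //; apply/bigcupP; exists c2.
Qed.

Lemma kept_trees_sub : kept_trees \subset trees.
Proof.
by apply/subsetP => P /bigcupP [c1 _ /bigcupP [c2 _ /(subsetP (kept_sub_trees _ _))]].
Qed.

Lemma cover_kept_trees_sub : cover kept_trees \subset S :\: C.
Proof. by apply/bigcupsP => P /(subsetP kept_trees_sub) /trees_sub. Qed.

Lemma S_kept_sub : S_kept \subset S.
Proof.
by rewrite subUset C_sub_S (subset_trans cover_kept_trees_sub) ?subsetDl.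
Qed.

Definition kept_part K Y := (K :&: S_kept) :\: Y.
Definition pruned_part K Y := (K :\: S_kept) :\: Y.

Lemma kept_sub_kept_part K Y c1 c2 P : K \in components mH S ->
  c1 \in C -> c2 \in C -> c1 \in K -> P \in kept c1 c2 -> [disjoint P & Y] ->
  P \subset kept_part K Y.
Proof.
move=> cK c1C c2C c1K Pk dPY.
have /setIdP [tP lP] := subsetP (kept_sub_linking c1 c2) P Pk.
have PK := links_sub_component cK tP c1K lP.
have PS : P \subset S_kept.
  by apply: subsetU; apply/orP; right; apply: bigcup_sup (mem_kept_trees c1C c2C Pk).
by rewrite /kept_part subsetD subsetI PK PS dPY.
Qed.

Lemma card_kept_avoiding c1 c2 R Y : R \in linking c1 c2 -> R \notin kept c1 c2 ->
  quota c1 c2 <= #|[set P in kept c1 c2 | [disjoint P & Y]]| + #|Y|.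
Proof.
move=> Rl Rk; rewrite -(card_kept_full Rl Rk); apply: card_disjoint_from.
exact: trivIsetS (kept_sub_trees c1 c2) (components_trivIset mHsym _).
Qed.

Lemma unkept_link_cyclic K Y R c1 c2 : K \in components mH S ->
  R \in trees -> R \notin kept_trees -> c1 \in C -> c2 \in C ->
  c1 \in kept_part K Y -> c2 \in kept_part K Y -> links R c1 c2 -> #|Y| < z ->
  ~~ acyclic_on mH (kept_part K Y).
Proof.
move=> cK tR Rnk.
wlog lt12 : c1 c2 / (c1 == c2) || (enum_rank c1 < enum_rank c2).
  move=> gen c1C c2C c1A c2A lR ltY; case: (eqVneq c1 c2) => [eq12|n12].
    by apply: (gen c1 c2) => //; rewrite eq12 eqxx.
  have [lt|gt|/val_inj/enum_rank_inj eq12] := ltngtP (enum_rank c1) (enum_rank c2).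
  - by apply: (gen c1 c2); rewrite ?lt ?orbT.
  - by apply: (gen c2 c1); rewrite ?gt ?orbT // -linksC.
  - by rewrite eq12 eqxx in n12.
move=> c1C c2C c1A c2A lR ltY.
have c1K : c1 \in K by move: c1A; rewrite !inE => /andP[_ /andP[]].
have Rl : R \in linking c1 c2 by rewrite inE tR.
have Rk : R \notin kept c1 c2 by apply: contra Rnk; apply: mem_kept_trees.
have card_free := card_kept_avoiding Y Rl Rk.
set free := [set P in kept c1 c2 | [disjoint P & Y]] in card_free.
have freeA P : P \in free -> P \subset kept_part K Y.
  by rewrite inE => /andP[Pk dPY]; apply: kept_sub_kept_part c1K Pk dPY.
have freeT P : P \in free -> P \in trees /\ links P c1 c2.
  by rewrite inE => /andP[/(subsetP (kept_sub_linking c1 c2))] /setIdP.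
case: (eqVneq c1 c2) lt12 card_free => [eq12|n12]; rewrite /quota.
  rewrite eq12 eqxx => _ zfree; have /card_gt0P [P Pf] : 0 < #|free|.
    by rewrite -(ltn_add2r #|Y|); apply: leq_trans zfree.
  have [tP] := freeT P Pf; rewrite -eq12 => lP.
  exact: link_loop_cyclic tP c1C lP c1A (freeA P Pf).
rewrite (negbTE n12) /= => -> zfree.
have /card_gt1P [P1 [P2 [P1f P2f n12P]]] : 1 < #|free|.
  by rewrite -(ltn_add2r #|Y|); apply: leq_trans zfree.
have [tP1 lP1] := freeT P1 P1f; have [tP2 lP2] := freeT P2 P2f.
exact: (link_pair_cyclic tP1 tP2 n12P c1C c2C n12 lP1 lP2 c1A c2A
  (freeA P1 P1f) (freeA P2 P2f)).
Qed.

Lemma unkept_tree b : b \in S :\: C -> b \notin S_kept ->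
  component mH (S :\: C) b \notin kept_trees.
Proof.
move=> bW; apply: contra => bk; rewrite /S_kept inE; apply/orP; right.
by apply/bigcupP; exists (component mH (S :\: C) b); rewrite ?mem_component.
Qed.

Lemma pruned_sub K Y : K \in components mH S -> pruned_part K Y \subset S :\: C.
Proof.
move=> cK; apply/subsetP => b; rewrite /pruned_part !inE => /and3P[_ bk bK].
rewrite (subsetP (components_sub cK) b bK) andbT.
by apply: contra bk => bC; rewrite /S_kept ?inE bC.
Qed.

Lemma pruned_not_kept K Y b : b \in pruned_part K Y -> b \notin S_kept.
Proof. by rewrite /pruned_part !inE => /and3P[]. Qed.

Lemma pruned_neighbor_C K Y b a : K \in components mH S ->
  b \in pruned_part K Y -> a \in kept_part K Y -> 0 < mH b a -> a \in C.
Proof.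
move=> cK bB; rewrite /kept_part !inE => /and3P[_ _ aS] ba.
apply/negPn/negP => aC; move: aS; rewrite (negbTE aC) /= => aKT.
have aW := subsetP cover_kept_trees_sub a aKT; case/bigcupP: aKT => P Pk aP.
have bW := subsetP (pruned_sub Y cK) b bB.
have cR := component_in_components mH bW.
have aR := components_closed mHsym cR (mem_component mH bW) aW ba.
have PR := components_eq mHsym (subsetP kept_trees_sub P Pk) cR aP aR.
by move: Pk; rewrite PR (negbTE (unkept_tree bW (pruned_not_kept bB))).
Qed.

Lemma acyclic_pruned K Y : K \in components mH S -> #|Y| < z ->
  acyclic_on mH (kept_part K Y) -> acyclic_on mH (K :\: Y).
Proof.
move=> cK ltY acA; have BW := pruned_sub Y cK.
have noLink b a1 a2 : b \in pruned_part K Y -> a1 \in kept_part K Y ->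
    a2 \in kept_part K Y -> a1 \in C -> a2 \in C ->
    ~~ links (component mH (S :\: C) b) a1 a2.
  move=> bB a1A a2A a1C a2C; apply: contraL acA => lR.
  have bW := subsetP BW b bB.
  apply: (unkept_link_cyclic cK (component_in_components mH bW)) lR ltY => //.
  exact: unkept_tree bW (pruned_not_kept bB).
have -> : K :\: Y = kept_part K Y :|: pruned_part K Y by rewrite -setDUl setID.
apply: (acyclic_on_setU mHsym) => //.
- rewrite -setI_eq0; apply/eqP/setP => x.
  rewrite /kept_part /pruned_part in_set0 in_setI !in_setD in_setI.
  by case: (x \in S_kept); rewrite ?andbF.
- move=> b1 b2 a1 a2 b1B cb a1A a2A ba1 ba2.
  have b2B := connect_adj_in cb b1B.
  have b1W := subsetP BW b1 b1B.
  have cb' : connect (adj mH (S :\: C)) b1 b2 := connect_adj_sub BW (fun _ _ => id) cb.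
  have b2R : b2 \in component mH (S :\: C) b1.
    by rewrite in_component (connect_adj_in cb' b1W).
  have b1R := mem_component mH b1W.
  have a1C := pruned_neighbor_C cK b1B a1A ba1.
  have a2C := pruned_neighbor_C cK b2B a2A ba2.
  case: (eqVneq a1 a2) => [ea|na]; last first.
    case/negP: (noLink b1 a1 a2 b1B a1A a2A a1C a2C); rewrite /links (negbTE na).
    by apply/andP; split; apply/existsP; [exists b1 | exists b2]; apply/andP.
  split=> //; apply/eqP/negP => /negP nb; rewrite -ea in ba2.
  case/negP: (noLink b1 a1 a1 b1B a1A a1A a1C a1C); rewrite /links eqxx.
  apply/orP; right; apply/existsP; exists b1; rewrite b1R /=.
  by apply/existsP; exists b2; rewrite b2R nb ba1 ba2.
- exact: acyclic_onS BW acyclic_forest.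
move=> b a bB aA; rewrite leqNgt; apply/negP => ba.
have bW := subsetP BW b bB; have aC := pruned_neighbor_C cK bB aA (ltnW ba).
case/negP: (noLink b a a bB aA aA aC aC); rewrite /links eqxx.
by apply/orP; left; apply/existsP; exists b; rewrite mem_component.
Qed.

Lemma kept_part_cyclic K Y : K \in components mH S -> #|Y| < #|C :&: K| ->
  ~~ acyclic_on mH (kept_part K Y).
Proof.
move=> cK ltY; have ltz := leq_trans ltY (card_C_component cK).
apply/negP => /(acyclic_pruned cK ltz) acK; have : fvs mH K <= #|Y :&: K|.
  by apply: fvs_leq_card; rewrite /is_fvs subsetIr setDIr setDv setU0.
rewrite fvs_component // leqNgt; apply/negP/negPn.
exact: leq_ltn_trans (subset_leq_card (subsetIl _ _)) ltY.
Qed.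

Lemma exists_component_lt X : X \subset S -> #|X| < #|C| ->
  exists2 K, K \in components mH S & #|X :&: K| < #|C :&: K|.
Proof.
move=> XS; have partS := components_partition mHsym S.
rewrite (card_partition_setI partS XS) (card_partition_setI partS C_sub_S) => lt.
apply/exists_inP; move: lt; apply: contraLR => /exists_inP nolt; rewrite -leqNgt.
by apply: leq_sum => K cK; rewrite leqNgt; apply/negP => ltK; apply: nolt; exists K.
Qed.

Lemma C_fvs_S_kept : is_fvs (restrict mH S_kept) S_kept C.
Proof.
rewrite /is_fvs subsetUl acyclic_restrict ?subsetDl //.
exact: acyclic_onS (setSD C S_kept_sub) acyclic_forest.
Qed.

Lemma fvs_S_kept : fvs (restrict mH S_kept) S_kept = #|C|.
Proof.
apply/eqP; rewrite eqn_leq fvs_leq_card ?C_fvs_S_kept //=.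
apply: leq_fvs => X /andP[XS]; rewrite acyclic_restrict ?subsetDl // => acX.
rewrite leqNgt; apply/negP => ltX.
have [K cK ltK] := exists_component_lt (subset_trans XS S_kept_sub) ltX.
case/negP: (kept_part_cyclic cK ltK); apply: acyclic_onS acX.
apply/subsetP => x; rewrite /kept_part !in_setD !in_setI.
by case: (x \in X); case: (x \in K).
Qed.

Lemma S_kept_component_sub K2 : K2 \in components mH S_kept ->
  exists2 K, K \in components mH S & K2 \subset K.
Proof.
move=> cK2; have [x xK2] := components_n0 cK2.
have xS := subsetP S_kept_sub x (subsetP (components_sub cK2) x xK2).
have cK := component_in_components mH xS; exists (component mH S x) => //.
exact: (components_subset mHsym S_kept_sub cK2 cK xK2 (mem_component mH xS)).
Qed.

Lemma acyclic_S_kept_outside K2 Y : K2 \in components mH S_kept ->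
  acyclic_on mH (K2 :\: Y) ->
  acyclic_on mH ((K2 :\: Y) :|: (S_kept :\: (C :|: K2))).
Proof.
move=> cK2 acY; apply: (acyclic_on_setU_disconnected mHsym) => //.
- rewrite -setI_eq0; apply/eqP/setP => y; rewrite in_set0 in_setI !in_setD in_setU.
  by case: (y \in K2); rewrite ?orbT ?andbF.
- move=> b a /setDP[bk]; rewrite in_setU => /norP[_ bK2] /setDP[aK2 _].
  apply/eqP; rewrite eqn0Ngt; apply: contra bK2 => ab.
  by apply: (components_closed mHsym cK2 aK2 bk); rewrite mHsym.
- apply: acyclic_onS acyclic_forest.
  exact: subset_trans (setDS _ (subsetUl _ _)) (setSD _ S_kept_sub).
Qed.

Lemma components_S_kept K2 : K2 \in components (restrict mH S_kept) S_kept ->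
  fvs (restrict mH S_kept) K2 = #|C :&: K2| /\ #|C :&: K2| <= z.
Proof.
rewrite components_restrict => cK2; have K2S := components_sub cK2.
have [K cK K2K] := S_kept_component_sub cK2.
have leK : #|C :&: K2| <= #|C :&: K| by apply/subset_leq_card/setIS.
split; last exact: leq_trans leK (card_C_component cK).
rewrite fvs_restrict //; apply/eqP; rewrite eqn_leq; apply/andP; split.
  apply: fvs_leq_card; rewrite /is_fvs subsetIr setDIr setDv setU0.
  exact: acyclic_onS (setSD C (subset_trans K2S S_kept_sub)) acyclic_forest.
apply: leq_fvs => Y /andP[YK2 acY]; rewrite leqNgt; apply/negP => ltY.
(* [Y'] also deletes [C :&: K] outside [K2], so that what is left of [K]
   outside [K2] lies in the forest. *)
set Y' := Y :|: (C :&: K) :\: K2.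
have ltY' : #|Y'| < #|C :&: K|.
  have cardD : #|(C :&: K) :\: K2| = #|C :&: K| - #|C :&: K2|.
    by rewrite cardsD -setIA (setIidPr K2K).
  have cardY' : #|Y'| <= #|Y| + #|(C :&: K) :\: K2| by rewrite cardsU leq_subr.
  lia.
case/negP: (kept_part_cyclic cK ltY').
apply: acyclic_onS (acyclic_S_kept_outside cK2 acY).
apply/subsetP => y; rewrite /kept_part /Y' !inE.
by case: (y \in K2); case: (y \in Y); case: (y \in C); case: (y \in K).
Qed.

Lemma certificate_S_kept : certificate_of_order z C S_kept (restrict mH S_kept).
Proof.
split; first by rewrite /is_min_fvs C_fvs_S_kept fvs_S_kept eqxx.
exact: components_S_kept.
Qed.

Lemma links_component P c1 c2 : P \in trees -> c1 \in C -> c2 \in C ->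
  links P c1 c2 -> c2 \in component mH S c1.
Proof.
move=> tP c1C c2C lP; have c1S := subsetP C_sub_S c1 c1C.
have cK := component_in_components mH c1S.
have PK := links_sub_component cK tP (mem_component mH c1S) lP.
case: (eqVneq c1 c2) lP => [<- _|n12]; first exact: mem_component.
rewrite /links (negbTE n12) => /andP[_ /existsP [b /andP[bP bc2]]].
exact: (components_closed mHsym cK (subsetP PK b bP) (subsetP C_sub_S c2 c2C) bc2).
Qed.

Lemma card_kept_le c1 c2 : c1 \in C -> c2 \in C ->
  #|kept c1 c2| <= quota c1 c2 * (c2 \in component mH S c1).
Proof.
move=> c1C c2C; case: (boolP (c2 \in _)) => [_|nc].
  by rewrite muln1 card_kept geq_minl.
rewrite muln0 leqn0 cards_eq0; apply/eqP/setP => P; rewrite in_set0.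
apply/negbTE/negP => /(subsetP (kept_sub_linking c1 c2)); rewrite inE => /andP[tP lP].
by rewrite (links_component tP c1C c2C lP) in nc.
Qed.

Lemma quota_add c1 c2 : quota c1 c2 + quota c2 c1 <= z.+1 + (c1 == c2) * z.-1.
Proof.
rewrite /quota eq_sym; case: eqVneq => [_|n12]; first by lia.
by case: ltngtP; rewrite ?addn0 ?add0n.
Qed.

Lemma sum_quota_component c1 : c1 \in C ->
  \sum_(c2 in C) (quota c1 c2 + quota c2 c1) * (c2 \in component mH S c1) + 1
    <= z ^ 2 + 2 * z.
Proof.
move=> c1C; set K1 := component mH S c1.
have : 0 < #|C :&: K1|.
  by apply/card_gt0P; exists c1; rewrite inE c1C mem_component ?(subsetP C_sub_S).
have : #|C :&: K1| <= z.
  by apply/card_C_component/component_in_components/(subsetP C_sub_S).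
have : \sum_(c2 in C) (quota c1 c2 + quota c2 c1) * (c2 \in K1)
         <= z.+1 * #|C :&: K1| + z.-1.
  apply: (@leq_trans (\sum_(c2 in C) (z.+1 * (c2 \in K1) + (c1 == c2) * z.-1))).
    apply: leq_sum => c2 _.
    by case: (c2 \in K1); rewrite ?muln1 ?muln0 // quota_add.
  rewrite big_split /= -big_distrr /= sum_mem_card leq_add2l.
  rewrite (bigD1 c1) //= eqxx mul1n big1 ?addn0 // => c2 /andP[_ n21].
  by rewrite eq_sym (negbTE n21).
move=> sum_le k_le k_gt0; nia.
Qed.

Lemma card_kept_trees : 2 * #|kept_trees| + #|C| <= #|C| * (z ^ 2 + 2 * z).
Proof.
pose inK c1 c2 : nat := c2 \in component mH S c1.
have le_sum : #|kept_trees| <= \sum_(c1 in C) \sum_(c2 in C) quota c1 c2 * inK c1 c2.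
  apply: leq_trans (card_bigcup_le _ _) _; apply: leq_sum => c1 c1C.
  apply: leq_trans (card_bigcup_le _ _) _; apply: leq_sum => c2 c2C.
  exact: card_kept_le.
have inKC c1 c2 : c1 \in C -> c2 \in C -> inK c1 c2 = inK c2 c1.
  move=> c1C c2C; rewrite /inK !in_component !(subsetP C_sub_S) //=.
  by rewrite (connect_adjC mHsym).
have symm : 2 * (\sum_(c1 in C) \sum_(c2 in C) quota c1 c2 * inK c1 c2) =
    \sum_(c1 in C) \sum_(c2 in C) (quota c1 c2 + quota c2 c1) * inK c1 c2.
  rewrite mul2n -addnn {2}exchange_big -big_split; apply: eq_bigr => c1 c1C.
  rewrite -big_split; apply: eq_bigr => c2 c2C.
  by rewrite mulnDl (inKC c2 c1).
apply: (@leq_trans (\sum_(c1 in C)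
    (\sum_(c2 in C) (quota c1 c2 + quota c2 c1) * inK c1 c2 + 1))).
  by rewrite big_split /= sum1_card leq_add2r -symm leq_mul2l le_sum orbT.
by rewrite -sum_nat_const; apply: leq_sum => c1; apply: sum_quota_component.
Qed.

End ShrinkCertificate.

Section KeptTreesInAntler.
Variables (V : finType) (m mH : V -> V -> nat) (z : nat) (C F S : {set V}).
Hypothesis sub : subgraph_of m (C :|: F) S mH.

Lemma forest_sub_F : S :\: C \subset F.
Proof. by rewrite subDset; case: sub. Qed.

Lemma cover_kept_trees_sub_F : cover (kept_trees mH z C S) \subset F.
Proof. exact: subset_trans (cover_kept_trees_sub mH z C S) forest_sub_F. Qed.

Lemma kept_trees_connect P : P \in kept_trees mH z C S ->
  {in P &, forall x y, connect (adj m F) x y}.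
Proof.
have [_ le mHsym _] := sub; move=> /(subsetP (kept_trees_sub mH z C S)) tP x y xP yP.
apply: connect_adj_sub (components_connect mHsym tP xP yP).
  exact: subset_trans (components_sub tP) forest_sub_F.
by move=> a b /leq_trans; apply.
Qed.

End KeptTreesInAntler.

Import GRing.Theory.
Local Open Scope ring_scope.

Theorem lemma14 (V : finType) (m : V -> V -> nat)
  (m_sym : forall x y, m x y = m y x)
  (z : nat) (C F : {set V}) :
  z_antler m z C F ->
  exists F' : {set V},
    [/\ F' \subset F, z_antler m z C F'
      & ((2 * #|components m F'|)%N%:Z <=
          (#|C|)%:Z * ((z%:Z) ^+ 2 + 2 * z%:Z - 1))].
Proof.
move=> [/andP[fvcCF _] [S [mH [sub cert]]]]; have [_ _ mHsym _] := sub.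
have KT_F := cover_kept_trees_sub_F z sub.
set F' := reach m F (cover (kept_trees mH z C S)); set Sk := S_kept mH z C S.
have sub' : subgraph_of m (C :|: F') Sk (restrict mH Sk).
  exact: subgraph_restrict sub (setUS C (sub_reach m KT_F)).
exists F'; split; first exact: reach_sub.
- split; last by exists Sk, (restrict mH Sk); split; last exact: certificate_S_kept.
  by rewrite /antler FVC_reach //= -(fvs_S_kept mHsym cert) (fvs_subgraph sub').
- have := card_components_reach m_sym KT_F (kept_trees_connect sub).
  have := card_kept_trees mHsym cert; rewrite -/F' expr2 => ? ?; nia.
Qed.
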